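(* Let $G$ be a permutation group and $K$ a field with a $G$-action. Assume that for every open subgroup $U\subset G$ there is an open subgroup $U'\subset U$ such that for every $g\in G$ the subgroup $gU'g^{-1}\cap U$ has infinite index in $U$. Then $\mathrm{Sm}_K(G)$ has no non-zero projective objects.
   Context: A permutation group is a Hausdorff topological group admitting a base of open sets consisting of left and right translates of subgroups. $\mathrm{Sm}_K(G)$ is the category of smooth left modules over the skew group ring $K\langle G\rangle$ ($(a[g])(b[h])=ab^g[gh]$), smooth meaning every element has an open stabilizer. *)

From HB Require Import structures.
From mathcomp Require Import all_boot all_algebra.
From mathcomp Require Import boolp classical_sets functions cardinality topology.
Set Implicit Arguments. Unset Strict Implicit. Unset Printing Implicit Defensive.
Import GRing.Theory.
Local Open Scope classical_set_scope.
Local Open Scope ring_scope.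

Section Defs.
Variables (G : topologicalType) (mul : G -> G -> G) (one : G) (inv : G -> G).

Definition is_group : Prop :=
  [/\ forall x y z, mul x (mul y z) = mul (mul x y) z,
      forall x, mul one x = x &
      forall x, mul (inv x) x = one].

Definition is_subgroup (H : set G) : Prop :=
  [/\ H one, forall x y, H x -> H y -> H (mul x y) & forall x, H x -> H (inv x)].

Definition lcoset (g : G) (H : set G) : set G := [set mul g h | h in H].
Definition rcoset (H : set G) (g : G) : set G := [set mul h g | h in H].

Definition is_perm_group : Prop :=
  [/\ is_group,
      continuous (fun p : G * G => mul p.1 p.2),
      continuous inv,
      hausdorff_space G &
      forall (A : set G) (x : G), open A -> A x ->
        exists (H : set G) (g : G) (B : set G),
          [/\ is_subgroup H, B = lcoset g H \/ B = rcoset H g,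
              open B, B x & B `<=` A]].

Definition is_open_subgroup (U : set G) : Prop := is_subgroup U /\ open U.

Definition conjsub (g : G) (H : set G) : set G :=
  [set mul (mul g h) (inv g) | h in H].

Definition infinite_index (H U : set G) : Prop :=
  ~ finite_set [set lcoset x H | x in U].

Variable (K : fieldType).

Definition is_field_action (sigma : G -> K -> K) : Prop :=
  [/\ forall g a b, sigma g (a + b) = sigma g a + sigma g b,
      forall g a b, sigma g (a * b) = sigma g a * sigma g b,
      forall g, sigma g 1 = 1,
      forall a, sigma one a = a &
      forall g h a, sigma (mul g h) a = sigma g (sigma h a)].

Variable (sigma : G -> K -> K).

(* A left K<G>-module, K<G> the skew group ring with (a[g])(b[h]) = a b^g [gh],
   is a K-vector space M with an action of G by additive maps such that
   [g](b m) = b^g ([g] m). *)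
Definition is_smooth_mod (M : lmodType K) (act : G -> M -> M) : Prop :=
  [/\ forall m, act one m = m,
      forall g h m, act (mul g h) m = act g (act h m),
      forall g m m', act g (m + m') = act g m + act g m',
      forall g (b : K) m, act g (b *: m) = sigma g b *: act g m &
      forall m, open [set g | act g m = m]].

Definition is_smooth_hom (M N : lmodType K) (actM : G -> M -> M)
  (actN : G -> N -> N) (f : M -> N) : Prop :=
  (forall (a : K) m m', f (a *: m + m') = a *: f m + f m') /\
  (forall g m, f (actM g m) = actN g (f m)).

Definition is_smooth_epi (M N : lmodType K) (actM : G -> M -> M)
  (actN : G -> N -> N) (f : M -> N) : Prop :=
  forall (Z : lmodType K) (actZ : G -> Z -> Z), is_smooth_mod actZ ->
  forall u v : N -> Z, is_smooth_hom actN actZ u -> is_smooth_hom actN actZ v ->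
    u \o f = v \o f -> u = v.

Definition is_smooth_projective (P : lmodType K) (actP : G -> P -> P) : Prop :=
  forall (M N : lmodType K) (actM : G -> M -> M) (actN : G -> N -> N),
    is_smooth_mod actM -> is_smooth_mod actN ->
  forall f : M -> N, is_smooth_hom actM actN f -> is_smooth_epi actM actN f ->
  forall p : P -> N, is_smooth_hom actP actN p ->
    exists q : P -> M, is_smooth_hom actP actM q /\ f \o q = p.

End Defs.

From HB Require Import structures.
From mathcomp Require Import all_boot all_algebra finmap.
From mathcomp Require Import boolp classical_sets functions cardinality topology.
From mathcomp.multinomials Require Import monalg.
Set Implicit Arguments. Unset Strict Implicit. Unset Printing Implicit Defensive.
Import GRing.Theory.
Local Open Scope classical_set_scope.
Local Open Scope ring_scope.

(* Let x be a non-zero element of a smooth projective module P.  For y in P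
   let U_y be the stabiliser of x and y, and V_y an open subgroup of U_y given
   by the hypothesis.  The permutation module (+)_y K[G/V_y] maps onto P by
   h V_y |-> h y, so the identity of P lifts to some q.  The finitely supported
   element q x is fixed by the stabiliser of x, hence by every U_y, so the
   U_y-orbit of each point h V_y of its support is finite.  But that orbit is
   in bijection with U_y / (h V_y h^-1 \cap U_y), which is infinite.
   The permutation module is smooth because the action on scalars is: since
   g (b x) = (g b) (g x) and x <> 0, whatever fixes x and b x fixes b. *)

Section GroupLaws.
Variables (G : topologicalType) (mul : G -> G -> G) (one : G) (inv : G -> G).
Hypothesis HG : is_group mul one inv.

Lemma mulA x y z : mul x (mul y z) = mul (mul x y) z.
Proof. by case: HG. Qed.

Lemma mul1g x : mul one x = x.
Proof. by case: HG. Qed.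

Lemma mulVg x : mul (inv x) x = one.
Proof. by case: HG. Qed.

Lemma mulKg x y : mul (inv x) (mul x y) = y.
Proof. by rewrite mulA mulVg mul1g. Qed.

Lemma mulgV x : mul x (inv x) = one.
Proof. by rewrite -{1}(mulKg (inv x) x) mulVg -mulA mul1g mulVg. Qed.

Lemma mulKVg x y : mul x (mul (inv x) y) = y.
Proof. by rewrite mulA mulgV mul1g. Qed.

Lemma mulg1 x : mul x one = x.
Proof. by rewrite -(mulVg x) mulKVg. Qed.

Lemma invgK x : inv (inv x) = x.
Proof. by rewrite -[RHS](mulKg (inv x) x) mulVg mulg1. Qed.

Lemma invg1 : inv one = one.
Proof. by rewrite -[inv one]mulg1 mulVg. Qed.

Lemma invMg x y : inv (mul x y) = mul (inv y) (inv x).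
Proof.
by rewrite -[RHS](mulKg (mul x y)) -mulA (mulA y) mulgV mul1g mulgV mulg1.
Qed.

Lemma mem_lcoset g H z : lcoset mul g H z <-> H (mul (inv g) z).
Proof.
split=> [[h Hh <-]|Hz]; first by rewrite mulKg.
by exists (mul (inv g) z); rewrite ?mulKVg.
Qed.

Lemma mem_conjsub h V z : conjsub mul inv h V z <-> V (mul (mul (inv h) z) h).
Proof.
split=> [[v Vv <-]|Vz]; first by rewrite mulA mulKg -mulA mulVg mulg1.
by exists (mul (mul (inv h) z) h); rewrite // mulA mulKVg -mulA mulgV mulg1.
Qed.

Lemma lcosetM g h S : lcoset mul g (lcoset mul h S) = lcoset mul (mul g h) S.
Proof.
apply/seteqP; split=> z /=.
  by case=> _ [k Sk <-] <-; exists k; rewrite ?mulA.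
by case=> k Sk <-; exists (mul h k); [exists k | rewrite mulA].
Qed.

Lemma lcoset1g S : lcoset mul one S = S.
Proof. by apply/seteqP; split=> z; rewrite mem_lcoset invg1 mul1g. Qed.

Section Subgroup.
Variable H : set G.
Hypothesis subH : is_subgroup mul one inv H.

Lemma subgroupMl g z : H g -> H (mul g z) <-> H z.
Proof.
case: subH => _ HM HV Hg; split=> [|Hz]; last exact: HM.
by move=> /(HM _ _ (HV _ Hg)); rewrite mulKg.
Qed.

Lemma subgroupV g : H (inv g) <-> H g.
Proof.
by case: subH => _ _ HV; split=> /HV; rewrite ?invgK.
Qed.

Lemma lcoset_id h : H h -> lcoset mul h H = H.
Proof.
by move=> Hh; apply/seteqP; split=> z; rewrite mem_lcoset subgroupMl ?subgroupV.
Qed.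

Lemma lcoset_eq g k : lcoset mul g H = lcoset mul k H <-> H (mul (inv k) g).
Proof.
split=> [eqgk|Hkg]; last by rewrite -(mulKVg k g) -lcosetM lcoset_id.
by rewrite -mem_lcoset -eqgk mem_lcoset mulVg; case: subH.
Qed.

End Subgroup.

Lemma open_subgroupI U V : is_open_subgroup mul one inv U ->
  is_open_subgroup mul one inv V -> is_open_subgroup mul one inv (U `&` V).
Proof.
move=> [[U1 UM UV] oU] [[V1 VM VV] oV]; split; last exact: openI.
by split=> [//|g h [? ?] [? ?]|g [? ?]]; split; auto.
Qed.

Lemma stab_subgroup (X : Type) (act : G -> X -> X) (x : X) :
  (forall y, act one y = y) -> (forall g h y, act (mul g h) y = act g (act h y)) ->
  is_subgroup mul one inv [set g | act g x = x].
Proof.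
move=> act1 actM; split=> [|g h /= gx hx|g /= gx]; first exact: act1.
  by rewrite actM hx gx.
by rewrite -{1}gx -actM mulVg act1.
Qed.

Lemma lcoset_conjsubI U V h u : is_subgroup mul one inv U ->
  is_subgroup mul one inv V -> U u ->
  lcoset mul u (conjsub mul inv h V `&` U) =
  [set z | U z /\ lcoset mul z (lcoset mul h V) = lcoset mul u (lcoset mul h V)].
Proof.
move=> subU subV Uu; have Uu' : U (inv u) by rewrite subgroupV.
apply/seteqP; split=> z; rewrite mem_lcoset /= mem_conjsub !lcosetM lcoset_eq //;
  by rewrite invMg !mulA (subgroupMl subU) // => -[].
Qed.

Lemma finite_index_conjsubI U V h : is_subgroup mul one inv U ->
  is_subgroup mul one inv V ->
  finite_set [set lcoset mul u (lcoset mul h V) | u in U] ->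
  finite_set [set lcoset mul u (conjsub mul inv h V `&` U) | u in U].
Proof.
move=> subU subV; move/(finite_image
  (fun S => [set z | U z /\ lcoset mul z (lcoset mul h V) = S])).
apply: sub_finite_set => _ [u Uu <-].
by exists (lcoset mul u (lcoset mul h V)); [exists u | rewrite lcoset_conjsubI].
Qed.

End GroupLaws.

Section TopologicalGroup.
Variables (G : topologicalType) (mul : G -> G -> G) (one : G) (inv : G -> G).
Hypotheses (HG : is_group mul one inv)
  (mul_cont : continuous (fun p : G * G => mul p.1 p.2)).

Lemma continuous_mull a : continuous (mul a).
Proof.
have -> : mul a = (fun p : G * G => mul p.1 p.2) \o pair a by [].
move=> g; apply: continuous_comp; last exact: mul_cont.
by apply: cvg_pair; [exact: cvg_cst | exact: cvg_id].
Qed.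

Lemma continuous_mulr b : continuous (mul^~ b).
Proof.
have -> : mul^~ b = (fun p : G * G => mul p.1 p.2) \o (pair^~ b) by [].
move=> g; apply: continuous_comp; last exact: mul_cont.
by apply: cvg_pair; [exact: cvg_id | exact: cvg_cst].
Qed.

Lemma nbhs1_subgroup_open S : is_subgroup mul one inv S -> nbhs one S -> open S.
Proof.
move=> subS S1; rewrite openE => g Sg.
have : nbhs (mul (inv g) g) S by rewrite (mulVg HG).
move=> /(@continuous_mull (inv g) g) nS.
have {}nS : nbhs g [set h | S (mul (inv g) h)] := nS.
apply: filterS nS => h /=.
by rewrite (subgroupMl HG subS) // (subgroupV HG subS).
Qed.

Lemma nbhs1_conjsub h V : is_open_subgroup mul one inv V ->
  nbhs one (conjsub mul inv h V).
Proof.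
move=> [[V1 _ _] oV].
have : nbhs (mul (mul (inv h) one) h) V.
  by rewrite (mulg1 HG) (mulVg HG); exact: open_nbhs_nbhs.
move=> /(continuous_comp (@continuous_mull (inv h) one) (@continuous_mulr h _)) nV.
have {}nV : nbhs one [set g | V (mul (mul (inv h) g) h)] := nV.
by apply: filterS nV => g; rewrite (mem_conjsub HG).
Qed.

End TopologicalGroup.

Lemma surjective_smooth_epi (G : topologicalType) (mul : G -> G -> G) (one : G)
    (K : fieldType) (sigma : G -> K -> K) (M N : lmodType K)
    (actM : G -> M -> M) (actN : G -> N -> N) (f : M -> N) :
  (forall n, exists m, f m = n) -> is_smooth_epi mul one sigma actM actN f.
Proof.
move=> fsurj Z actZ _ u v _ _ uf_vf; apply: funext => n.
by have [m <-] := fsurj n; exact: (congr1 (fun h => h m) uf_vf).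
Qed.

Section SmoothModules.
Variables (G : topologicalType) (mul : G -> G -> G) (one : G) (inv : G -> G).
Variables (K : fieldType) (sigma : G -> K -> K).
Hypotheses (HG : is_group mul one inv) (Hsigma : is_field_action mul one sigma).

Lemma field_action0 g : sigma g 0 = 0.
Proof.
have [sigmaD _ _ _ _] := Hsigma.
by apply: (addrI (sigma g 0)); rewrite -sigmaD !addr0.
Qed.

Lemma field_action_eq0 g a : (sigma g a == 0) = (a == 0).
Proof.
have [_ sigmaM sigma1 _ _] := Hsigma.
have [->|a0] := eqVneq a 0; first by rewrite field_action0 eqxx.
apply: contraNF (oner_neq0 K) => /eqP sa0.
by rewrite -(sigma1 g) -(mulfV a0) sigmaM sa0 mul0r.
Qed.

Variables (P : lmodType K) (actP : G -> P -> P).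
Hypothesis HP : is_smooth_mod mul one sigma actP.

Lemma smooth_act0 g : actP g 0 = 0.
Proof.
have [_ _ actD _ _] := HP.
by apply: (addrI (actP g 0)); rewrite -actD !addr0.
Qed.

Lemma smooth_act_sum g (I : Type) (r : seq I) (F : I -> P) :
  actP g (\sum_(i <- r) F i) = \sum_(i <- r) actP g (F i).
Proof. by have [_ _ actD _ _] := HP; rewrite (big_morph _ (actD g) (smooth_act0 g)). Qed.

Lemma smooth_stab_open_subgroup y :
  is_open_subgroup mul one inv [set g | actP g y = y].
Proof. by case: HP => act1 actM _ _ stab_open; split; [exact: stab_subgroup|]. Qed.

Lemma nbhs1_field_action_fix (x : P) b : x != 0 -> nbhs one [set g | sigma g b = b].
Proof.
have nbhs1_stab y : nbhs one [set g | actP g y = y].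
  by have [[y1 _ _] oy] := smooth_stab_open_subgroup y; exact: open_nbhs_nbhs.
move=> x0; apply: filterS (filterI (nbhs1_stab x) (nbhs1_stab (b *: x))).
have [_ _ _ actZ _] := HP; move=> g [/= gx]; rewrite actZ gx => /eqP.
by rewrite -subr_eq0 -scalerBl scaler_eq0 (negbTE x0) orbF subr_eq0 => /eqP.
Qed.

End SmoothModules.

Section PermutationModule.
Variables (G : topologicalType) (mul : G -> G -> G) (one : G) (inv : G -> G).
Variables (K : fieldType) (sigma : G -> K -> K).
Hypotheses (HG : is_group mul one inv) (Hsigma : is_field_action mul one sigma).
Variables (T : choiceType) (tact : G -> T -> T).
Hypotheses (tact1 : forall t, tact one t = t)
  (tactM : forall g h t, tact (mul g h) t = tact g (tact h t)).

Lemma tactK g : cancel (tact g) (tact (inv g)).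
Proof. by move=> t; rewrite -tactM (mulVg HG) tact1. Qed.

Lemma tactVK g : cancel (tact (inv g)) (tact g).
Proof. by move=> t; rewrite -tactM (mulgV HG) tact1. Qed.

Definition perm_act g (c : {malg K[T]}) : {malg K[T]} :=
  [malg t in [fset tact g s | s in msupp c]%fset => sigma g c@_(tact (inv g) t)].

Lemma perm_actE g c t : (perm_act g c)@_t = sigma g c@_(tact (inv g) t).
Proof.
rewrite mcoeffE; case: ifPn => // tN.
rewrite mcoeff_outdom ?(field_action0 Hsigma) //; apply: contra tN => ct.
by apply/imfsetP; exists (tact (inv g) t); rewrite ?tactVK.
Qed.

Lemma perm_act1 c : perm_act one c = c.
Proof.
have [_ _ _ sigma1 _] := Hsigma.
by apply/malgP => t; rewrite perm_actE (invg1 HG) tact1 sigma1.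
Qed.

Lemma perm_actM g h c : perm_act (mul g h) c = perm_act g (perm_act h c).
Proof.
have [_ _ _ _ sigmaM] := Hsigma.
by apply/malgP => t; rewrite !perm_actE (invMg HG) tactM sigmaM.
Qed.

Lemma perm_act0 g : perm_act g 0 = 0.
Proof. by apply/malgP => t; rewrite perm_actE !mcoeff0 (field_action0 Hsigma). Qed.

Lemma perm_actD g : {morph perm_act g : c d / c + d}.
Proof.
have [sigmaD _ _ _ _] := Hsigma.
by move=> c d; apply/malgP => t; rewrite mcoeffD !perm_actE mcoeffD sigmaD.
Qed.

Lemma perm_actZ g a c : perm_act g (a *: c) = sigma g a *: perm_act g c.
Proof.
have [_ sigmaM _ _ _] := Hsigma.
by apply/malgP => t; rewrite mcoeffZ !perm_actE mcoeffZ sigmaM.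
Qed.

Lemma perm_actU g a t : perm_act g << a *g t >> = << sigma g a *g tact g t >>.
Proof.
apply/malgP => s; rewrite perm_actE !mcoeffU (can2_eq (tactK g) (tactVK g)).
by case: (t == _); rewrite ?(field_action0 Hsigma).
Qed.

Lemma perm_fixed_orbit_finite (U : set G) c t :
  (forall u, U u -> perm_act u c = c) -> t \in msupp c ->
  finite_set [set tact u t | u in U].
Proof.
move=> Ufix ct; apply: sub_finite_set (finite_fset (msupp c)) => _ [u Uu <-] /=.
by rewrite -mcoeff_neq0 -(Ufix u Uu) perm_actE tactK (field_action_eq0 Hsigma) mcoeff_neq0.
Qed.

Variables (P : lmodType K) (actP : G -> P -> P) (val : T -> P).
Hypotheses (HP : is_smooth_mod mul one sigma actP)
  (val_act : forall g t, val (tact g t) = actP g (val t)).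

Definition lin_ext (c : {malg K[T]}) : P := \sum_(t <- msupp c) c@_t *: val t.

Lemma lin_extEw (d : {fset T}) c : (msupp c `<=` d)%fset ->
  lin_ext c = \sum_(t <- d) c@_t *: val t.
Proof.
move=> le_cd; rewrite [LHS](big_fset_incl _ le_cd) //= => t _ /mcoeff_outdom ->.
by rewrite scale0r.
Qed.

Lemma lin_ext0 : lin_ext 0 = 0.
Proof. by rewrite /lin_ext msupp0 big_seq_fset0. Qed.

Lemma lin_extU a t : lin_ext << a *g t >> = a *: val t.
Proof. by rewrite (lin_extEw msuppU_le) big_seq_fset1 mcoeffUU. Qed.

Lemma lin_extD : {morph lin_ext : c d / c + d}.
Proof.
move=> c d; rewrite !(@lin_extEw (msupp c `|` msupp d)%fset) ?msuppD_le //;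
  rewrite ?fsubsetUl ?fsubsetUr // -big_split /=.
by apply: eq_bigr => t _; rewrite mcoeffD scalerDl.
Qed.

Lemma lin_extZ a c : lin_ext (a *: c) = a *: lin_ext c.
Proof.
rewrite (lin_extEw (msuppZ_le _ _)) /lin_ext scaler_sumr.
by apply: eq_bigr => t _; rewrite mcoeffZ scalerA.
Qed.

Lemma lin_ext_act g c : lin_ext (perm_act g c) = actP g (lin_ext c).
Proof.
have [_ _ _ actZ _] := HP.
rewrite {1}(monalgE c) (big_morph _ (perm_actD g) (perm_act0 g)).
rewrite (big_morph _ lin_extD lin_ext0) [in RHS]/lin_ext (smooth_act_sum HP).
by apply: eq_bigr => t _; rewrite perm_actU !lin_extU actZ val_act.
Qed.

Lemma lin_ext_hom : is_smooth_hom perm_act actP lin_ext.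
Proof. by split=> [a c d|]; [rewrite lin_extD lin_extZ | exact: lin_ext_act]. Qed.

Hypotheses (mul_cont : continuous (fun p : G * G => mul p.1 p.2))
  (tact_smooth : forall t, nbhs one [set g | tact g t = t])
  (sigma_smooth : forall a, nbhs one [set g | sigma g a = a]).

Lemma nbhs1_perm_stab c : nbhs one [set g | perm_act g c = c].
Proof.
rewrite (monalgE c).
apply: (big_ind (fun d => nbhs one [set g | perm_act g d = d])).
- by apply: filterS filterT => g _ /=; rewrite perm_act0.
- move=> d e nd ne; apply: filterS (filterI nd ne) => g [/= gd ge].
  by rewrite perm_actD gd ge.
- move=> t _; apply: filterS (filterI (sigma_smooth c@_t) (tact_smooth t)).
  by move=> g [/= ga gt]; rewrite perm_actU ga gt.
Qed.

Lemma perm_module_smooth : is_smooth_mod mul one sigma perm_act.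
Proof.
split; [exact: perm_act1 | exact: perm_actM | exact: perm_actD | exact: perm_actZ |].
move=> c; apply: (nbhs1_subgroup_open HG mul_cont); last exact: nbhs1_perm_stab.
exact: (stab_subgroup HG _ perm_act1 perm_actM).
Qed.

End PermutationModule.

(* The basis of (+)_i K[G/V_i]: an index i together with a left coset of V_i. *)
Definition coset_cell (G : topologicalType) (mul : G -> G -> G) (I : Type)
  (V : I -> set G) := {t : I * set G | exists h, t.2 = lcoset mul h (V t.1)}.

HB.instance Definition _ G mul I V := gen_eqMixin (@coset_cell G mul I V).
HB.instance Definition _ G mul I V := gen_choiceMixin (@coset_cell G mul I V).

Section CosetCells.
Variables (G : topologicalType) (mul : G -> G -> G) (one : G) (inv : G -> G).
Hypothesis HG : is_group mul one inv.
Variables (I : Type) (V : I -> set G).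
Local Notation cell := (coset_cell mul V).

Lemma cell_act_subproof g (t : cell) :
  exists h, lcoset mul g (sval t).2 = lcoset mul h (V (sval t).1).
Proof. by case: t => -[i S] [h /= ->]; exists (mul g h); rewrite (lcosetM HG). Qed.

Definition cell_act g (t : cell) : cell :=
  exist _ ((sval t).1, lcoset mul g (sval t).2) (cell_act_subproof g t).

Definition base_cell i : cell :=
  exist _ (i, V i) (ex_intro _ one (esym (lcoset1g HG (V i)))).

Lemma cell_act1 t : cell_act one t = t.
Proof. by case: t => -[i S] tP; apply: eq_exist; rewrite /= (lcoset1g HG). Qed.

Lemma cell_actM g h t : cell_act (mul g h) t = cell_act g (cell_act h t).
Proof. by apply: eq_exist; rewrite /= (lcosetM HG). Qed.

Hypotheses (mul_cont : continuous (fun p : G * G => mul p.1 p.2))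
  (V_open : forall i, is_open_subgroup mul one inv (V i)).

Lemma nbhs1_cell_stab t : nbhs one [set g | cell_act g t = t].
Proof.
case: t => -[i S] [h /= eS]; have [subV _] := V_open i.
apply: filterS (nbhs1_conjsub HG mul_cont h (V_open i)) => g /(mem_conjsub HG) Vg.
apply: eq_exist; rewrite /= eS (lcosetM HG); congr (_, _).
by apply/(lcoset_eq HG subV); rewrite (mulA HG).
Qed.

Variables (K : fieldType) (sigma : G -> K -> K) (P : lmodType K)
  (actP : G -> P -> P) (vec : I -> P).
Hypotheses (HP : is_smooth_mod mul one sigma actP)
  (V_fix : forall i, V i `<=` [set g | actP g (vec i) = vec i]).

Definition cell_val (t : cell) : P := actP (xget one (sval t).2) (vec (sval t).1).

Lemma cell_valE t h : (sval t).2 = lcoset mul h (V (sval t).1) ->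
  cell_val t = actP h (vec (sval t).1).
Proof.
have [_ actM _ _ _] := HP; case: t => -[i S] tP /= eS.
have [[V1 _ _] _] := V_open i.
have : S (xget one S) by apply: xgetPex; exists (mul h one); rewrite eS; exists one.
rewrite /cell_val /= eS => /(mem_lcoset HG) /V_fix /= fix_vec.
by rewrite -(mulKVg HG h (xget one _)) actM fix_vec.
Qed.

Lemma cell_val_act g t : cell_val (cell_act g t) = actP g (cell_val t).
Proof.
have [_ actM _ _ _] := HP; case: t => -[i S] [h /= eS].
rewrite (@cell_valE (cell_act g _) (mul g h)) /=; last by rewrite eS (lcosetM HG).
by rewrite (@cell_valE _ h) ?actM.
Qed.

Lemma cell_val_base i : cell_val (base_cell i) = vec i.
Proof.
have [act1 _ _ _ _] := HP.
by rewrite (@cell_valE _ one) ?act1 //= (lcoset1g HG).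
Qed.

End CosetCells.

Section NoProjectives.
Variables (G : topologicalType) (mul : G -> G -> G) (one : G) (inv : G -> G).
Variables (K : fieldType) (sigma : G -> K -> K).
Hypotheses (HG : is_group mul one inv)
  (mul_cont : continuous (fun p : G * G => mul p.1 p.2))
  (Hsigma : is_field_action mul one sigma).
Hypothesis conj_index : forall U : set G, is_open_subgroup mul one inv U ->
  exists U' : set G, [/\ is_open_subgroup mul one inv U', U' `<=` U &
    forall g : G, infinite_index mul (conjsub mul inv g U' `&` U) U].
Variables (P : lmodType K) (actP : G -> P -> P) (x : P).
Hypotheses (HP : is_smooth_mod mul one sigma actP) (x0 : x != 0).

Let stab y := [set g | actP g y = y].
Let U y := stab x `&` stab y.

Let U_open y : is_open_subgroup mul one inv (U y).
Proof.
exact: open_subgroupI (smooth_stab_open_subgroup HG HP x)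
  (smooth_stab_open_subgroup HG HP y).
Qed.

Let V y := projT1 (cid (conj_index (U_open y))).

Let VP y : [/\ is_open_subgroup mul one inv (V y), V y `<=` U y &
    forall g : G, infinite_index mul (conjsub mul inv g (V y) `&` U y) (U y)].
Proof. exact: projT2 (cid (conj_index (U_open y))). Qed.

Let V_open y : is_open_subgroup mul one inv (V y). Proof. by case: (VP y). Qed.
Let V_fix y : V y `<=` stab y.
Proof. by have [_ VU _] := VP y; move=> g /VU []. Qed.

Local Notation cell := (coset_cell mul V).
Let cell_act1V := @cell_act1 _ _ _ _ HG _ V.
Let cell_actMV := @cell_actM _ _ _ _ HG _ V.
Local Notation M := {malg K[cell]}.
Local Notation actM := (perm_act inv sigma (cell_act HG (V:=V))).
Local Notation f := (lin_ext (cell_val one actP id)).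

Let M_smooth : is_smooth_mod mul one sigma actM.
Proof.
apply: perm_module_smooth => //; first exact: nbhs1_cell_stab mul_cont V_open.
by move=> a; exact: (nbhs1_field_action_fix HG HP a x0).
Qed.

Let f_hom : is_smooth_hom actM actP f.
Proof.
by apply: (lin_ext_hom HG Hsigma) => //; exact: (cell_val_act _ V_open HP V_fix).
Qed.

Let f_epi : is_smooth_epi mul one sigma actM actP f.
Proof.
apply: surjective_smooth_epi => y; exists << base_cell HG V y >>.
by rewrite lin_extU scale1r (cell_val_base _ V_open HP V_fix).
Qed.

Lemma nonzero_smooth_not_projective : ~ is_smooth_projective mul one sigma actP.
Proof.
move=> projP; have [q [[_ q_act] fq]] := projP _ _ _ _ M_smooth HP _ f_hom f_epi id
  (conj (fun _ _ _ => erefl) (fun _ _ => erefl)).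
pose c : M := q x.
have c_fix u : stab x u -> actM u c = c by rewrite /c -q_act => ->.
have /fset0Pn [t ct] : msupp c != fset0.
  apply: contraNneq x0 => c0.
  by rewrite -[x]/(id x) -fq /= -/c /lin_ext c0 big_seq_fset0.
case: (svalP t) => h eS; set y := (sval t).1 in eS.
have [subU _] := U_open y; have [[subV _] _ Vinf] := VP y.
apply: (Vinf h); apply: (finite_index_conjsubI HG subU subV); rewrite -eS.
have := perm_fixed_orbit_finite HG Hsigma cell_act1V cell_actMV
  (fun u (Uu : U y u) => c_fix u (proj1 Uu)) ct.
move/(finite_image (fun s : cell => (sval s).2)); apply: sub_finite_set.
by move=> _ [u Uu <-]; exists (cell_act HG u t); first exists u.
Qed.

End NoProjectives.

Theorem lemma3p4 (G : topologicalType) (mul : G -> G -> G) (one : G)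
  (inv : G -> G) (K : fieldType) (sigma : G -> K -> K) :
  is_perm_group mul one inv ->
  is_field_action mul one sigma ->
  (forall U : set G, is_open_subgroup mul one inv U ->
     exists U' : set G, [/\ is_open_subgroup mul one inv U', U' `<=` U &
       forall g : G, infinite_index mul (conjsub mul inv g U' `&` U) U]) ->
  forall (P : lmodType K) (actP : G -> P -> P),
    is_smooth_mod mul one sigma actP ->
    is_smooth_projective mul one sigma actP ->
    forall x : P, x = 0.
Proof.
move=> [HG mul_cont _ _ _] Hsigma conj_index P actP HP projP x.
apply/eqP/contraT => x0.
by case: (nonzero_smooth_not_projective HG mul_cont Hsigma conj_index HP x0 projP).
Qed.
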